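(* Let $V$ be a simple unitary vertex operator algebra and let $a \in V_d$. Then for all $b \in V$ and all integers $m \geq 0$, $$\|a_m b\|^2 \leq \big(b \,\big|\, (a_{-d}a^* )_0\, b\big).$$ Consequently $\|a_m\|_n^2 \leq \|(a_{-d}a^* )_0\|_n$ for all $m \in \mathbb{Z}_{\geq 0}$ and all $n \in \mathbb{Z}$; in particular $\|a_0\|_n^2 \leq \|(a_{-d}a^* )_0\|_n$ for all $n\in\mathbb{Z}$.
   Context: A simple unitary vertex operator algebra is a vertex operator algebra $V$ (over $\mathbb{C}$) of CFT type, i.e. $V=\bigoplus_{n\geq 0}V_n$ with $V_n=\ker(L_0-n1_V)$ and $V_0=\mathbb{C}\Omega$, with vacuum $\Omega$ and conformal vector $\nu$, $Y(\nu,z)=\sum_{n}L_nz^{-n-2}$, equipped with a scalar product $(\cdot|\cdot)$ with $(\Omega|\Omega)=1$ and an antilinear involution $a\mapsto a^*$ with $\nu^*=\nu$ such that $(b|a_nc)=(a^*_{-n}b|c)$ for all $a,b,c\in V$, $n\in\mathbb{Z}$. For $a\in V$ the modes $a_n\in\mathrm{End}(V)$ are defined by $Y(z^{L_0}a,z)=\sum_{n\in\mathbb{Z}}a_nz^{-n}$; for $a\in V_d$ this means $a_n=a_{(n+d-1)}$ where $Y(a,z)=\sum_n a_{(n)}z^{-n-1}$, and $a_{-d}b=a_{(-1)}b$. Write $\|a\|=\sqrt{(a|a)}$, $V_{\leq n}=\bigoplus_{k\leq n}V_k$, and for $R\in\mathrm{End}(V)$, $\|R\|_n:=\sup\{\|Rb\|: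 b\in V_{\leq n},\ \|b\|\leq 1\}\in[0,+\infty]$. *)

From HB Require Import structures.
From mathcomp Require Import all_boot all_order all_algebra.
From mathcomp Require Import complex.
From mathcomp Require Import all_classical all_reals ereal.

Set Implicit Arguments.
Unset Strict Implicit.
Unset Printing Implicit Defensive.

Import Order.TTheory GRing.Theory Num.Theory.
Local Open Scope ring_scope.

(* Generalized binomial coefficient binom(r, i) for r : int, i : nat:
   r (r-1) ... (r-i+1) / i!. *)
Definition zbin (r : int) (i : nat) : int :=
  match r with
  | Posz n => ('C(n, i))%:Z
  | Negz n => (-1) ^+ i * ('C(n + i, i))%:Z   (* Negz n = -(n+1) *)
  end.

(* Raw data of a (unitary) vertex operator algebra on a complex vector space V
   (complex numbers = R[i] for R : realType).
   - Y a n b   is  a_(n) b  (Y(a,z) = sum_n a_(n) z^{-n-1});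
   - vac is the vacuum Omega, conf the conformal vector nu, cc the central charge;
   - proj k is the projection onto V_k = ker(L_0 - k) w.r.t. V = (+)_{k>=0} V_k,
     dbound a is a bound on the degrees occurring in a;
   - ip is the scalar product (linear in the first variable), star the
     antilinear involution a |-> a^*. *)
Record VOAData (R : realType) (V : lmodType R[i]) := {
  Y : V -> int -> V -> V;
  vac : V;
  conf : V;
  cc : R[i];
  proj : nat -> V -> V;
  dbound : V -> nat;
  ip : V -> V -> R[i];
  star : V -> V
}.

Section Defs.
Variables (R : realType) (V : lmodType R[i]) (D : VOAData V).

Definition Lop (n : int) : V -> V := Y D (conf D) (n + 1).

Definition homog (k : nat) (a : V) : Prop := Lop 0 a = k%:R *: a.

(* shifted modes  a_n  defined by Y(z^{L_0} a, z) = sum_n a_n z^{-n};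
   for a in V_d, a_n = a_(n+d-1); extended linearly via the grading. *)
Definition smode (a : V) (n : int) (b : V) : V :=
  \sum_(k < dbound D a) Y D (proj D k a) (n + k%:Z - 1) b.

Definition vnorm (v : V) : R := Num.sqrt (complex.Re (ip D v v)).

Definition Vle (n : int) : set V :=
  [set b | forall k : nat, n < k%:Z -> proj D k b = 0].

Definition opnorm (T : V -> V) (n : int) : \bar R :=
  ereal_sup [set (vnorm (T b))%:E | b in [set b | Vle n b /\ vnorm b <= 1]].

Definition voa_ideal (I : V -> Prop) : Prop :=
  I 0 /\ (forall (c : R[i]) u v, I u -> I v -> I (c *: u + v)) /\
  (forall a v n, I v -> I (Y D a n v) /\ I (Y D v n a)).

Definition is_simple_unitary_VOA : Prop :=
  (forall (c : R[i]) a a' n b, Y D (c *: a + a') n b = c *: Y D a n b + Y D a' n b) /\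
  (forall (c : R[i]) a n b b', Y D a n (c *: b + b') = c *: Y D a n b + Y D a n b') /\
  (forall a b, exists N : int, forall n, N <= n -> Y D a n b = 0) /\
  (forall n b, Y D (vac D) n b = if n == -1 then b else 0) /\
  (forall a, Y D a (-1) (vac D) = a) /\
  (forall a n, 0 <= n -> Y D a n (vac D) = 0) /\
  (* Borcherds (Jacobi) identity; the sums are finite by truncation *)
  (forall a b c (p q r : int), exists K0 : nat, forall K : nat, (K0 <= K)%N ->
     \sum_(i < K) ((zbin p i)%:~R : R[i]) *: Y D (Y D a (r + i%:Z) b) (p + q - i%:Z) c =
     \sum_(i < K) (((-1) ^+ i * (zbin r i)%:~R) : R[i]) *:
        (Y D a (p + r - i%:Z) (Y D b (q + i%:Z) c)
         - (((-1) ^ r) : R[i]) *: Y D b (q + r - i%:Z) (Y D a (p + i%:Z) c))) /\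
  (forall (m n : int) v,
     Lop m (Lop n v) - Lop n (Lop m v) =
       (m - n)%:~R *: Lop (m + n) v
       + (if m + n == 0 then ((m ^+ 3 - m)%:~R / 12%:R * cc D) *: v else 0)) /\
  (forall a n b, Y D (Lop (-1) a) n b = - (n%:~R *: Y D a (n - 1) b)) /\
  (forall k (c : R[i]) u v, proj D k (c *: u + v) = c *: proj D k u + proj D k v) /\
  (forall k v, homog k (proj D k v)) /\
  (forall k v, homog k v -> proj D k v = v) /\
  (forall j k v, homog k v -> j <> k -> proj D j v = 0) /\
  (forall v k, (dbound D v <= k)%N -> proj D k v = 0) /\
  (forall v, v = \sum_(k < dbound D v) proj D k v) /\
  (forall k : nat, exists s : seq V, forall v, homog k v ->
     exists c : 'I_(size s) -> R[i], v = \sum_(i < size s) c i *: nth 0 s i) /\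
  (forall v, homog 0 v -> exists c : R[i], v = c *: vac D) /\
  homog 2 (conf D) /\
  (forall I, voa_ideal I -> (forall v, I v -> v = 0) \/ (forall v, I v)) /\
  (forall (c : R[i]) u u' v, ip D (c *: u + u') v = c * ip D u v + ip D u' v) /\
  (forall u v, ip D u v = conjc (ip D v u)) /\
  (forall v, 0 <= ip D v v) /\
  (forall v, ip D v v = 0 -> v = 0) /\
  ip D (vac D) (vac D) = 1 /\
  (forall (c : R[i]) u v, star D (c *: u + v) = conjc c *: star D u + star D v) /\
  (forall a, star D (star D a) = a) /\
  star D (conf D) = conf D /\
  (forall a b c (n : int), ip D b (smode a n c) = ip D (smode (star D a) (- n) b) c).

End Defs.

From Pilot Require Import Defs.

(* Let a be in V_d.  The heart of the proof is an exact formula for the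
   quadratic form of the zero mode of the normal-ordered product a_{-d} a^*:
   by the Borcherds identity with p = 0, r = -1, for every x,
     (a_(-1) x)_(q) = sum_i a_(-1-i) x_(q+i) + x_(q-1-i) a_(i)   (finite sums),
   and invariance of the scalar product turns each term of the resulting
   expansion of (b | (a_{-d} a^* )_0 b) into a squared norm:
     (b | (a_{-d} a^* )_0 b) = sum_i ||a^*_(d+i) b||^2 + ||a_(i) b||^2.
   Since a_m = a_(m+d-1), the square ||a_m b||^2 is one of these nonnegative
   terms when m + d >= 1; when m = d = 0, a is a multiple of the vacuum and
   ||a_0 b|| = ||a^*_0 b|| is the term i = 0 of the first series.
   The operator-norm bounds follow by Cauchy-Schwarz on the unit ball of
   V_{<=n} and the fact that squaring commutes with suprema of nonnegative
   reals. *)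

From HB Require Import structures.
From mathcomp Require Import all_boot all_order all_algebra.
From mathcomp Require Import complex.
From mathcomp Require Import all_classical all_reals ereal.
From mathcomp Require Import zify lra.
Import Order.TTheory GRing.Theory Num.Theory.
Local Open Scope ring_scope.
Local Open Scope complex_scope.
Set Implicit Arguments.
Unset Strict Implicit.
Unset Printing Implicit Defensive.

Lemma morph_add0 (U W : zmodType) (f : U -> W) :
  {morph f : u v / u + v} -> f 0 = 0.
Proof. by move=> fD; apply: (@addrI _ (f 0)); rewrite -fD !addr0. Qed.

Lemma morph_add_sum (U W : zmodType) (f : U -> W) (I : Type) (r : seq I)
    (P : pred I) (F : I -> U) :
  {morph f : u v / u + v} ->
  f (\sum_(i <- r | P i) F i) = \sum_(i <- r | P i) f (F i).
Proof. by move=> fD; apply: (big_morph f fD (morph_add0 fD)). Qed.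

Lemma eventually_forall_lt (P : nat -> nat -> Prop) (n : nat) :
  (forall j, (j < n)%N -> exists K0, forall K, (K0 <= K)%N -> P j K) ->
  exists K0, forall K, (K0 <= K)%N -> forall j, (j < n)%N -> P j K.
Proof.
elim: n => [|n IH] H; first by exists 0%N.
have [K1 H1] := IH (fun j hj => H j (ltnW hj)).
have [K2 H2] := H n (ltnSn n).
exists (maxn K1 K2) => K hK j; rewrite ltnS leq_eqVlt => /orP [/eqP ->|hj].
  by apply: H2; apply: leq_trans hK; apply: leq_maxr.
by apply: H1 => //; apply: leq_trans hK; apply: leq_maxl.
Qed.

Lemma le_sum_pair (T : numDomainType) (K : nat) (F G : 'I_K -> T) (i0 : 'I_K) :
  (forall i, 0 <= F i) -> (forall i, 0 <= G i) ->
  F i0 <= \sum_(i < K) (F i + G i) /\ G i0 <= \sum_(i < K) (F i + G i).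
Proof.
move=> F0 G0.
have rest0 : 0 <= \sum_(i < K | i != i0) (F i + G i).
  by apply: sumr_ge0 => i _; apply: addr_ge0.
rewrite (bigD1 i0) //=; split; first by rewrite -addrA lerDl addr_ge0.
by rewrite addrAC lerDr addr_ge0.
Qed.

Lemma sign_zbinN1 (T : nzRingType) (i : nat) :
  ((-1) ^+ i * (zbin (-1) i)%:~R : T) = 1.
Proof.
by rewrite /zbin /= add0n binn mulr1 rmorphXn rmorphN1 -exprD -signr_odd oddD addbb.
Qed.

Lemma ereal_sup_sqr_le (R : realType) (T : Type) (S : set T) (f g : T -> R)
    (x0 : T) :
  S x0 -> (forall b, S b -> 0 <= f b) -> (forall b, S b -> f b ^+ 2 <= g b) ->
  (ereal_sup [set (f b)%:E | b in S] * ereal_sup [set (f b)%:E | b in S]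
     <= ereal_sup [set (g b)%:E | b in S])%E.
Proof.
move=> Sx0 f0 fg.
have g0 b : S b -> 0 <= g b by move=> Sb; apply: le_trans (fg b Sb); apply: sqr_ge0.
have supF0 : (0 <= ereal_sup [set (f b)%:E | b in S])%E.
  apply: le_trans (_ : (f x0)%:E <= _)%E; first by rewrite lee_fin f0.
  by apply: ereal_sup_ubound; exists x0.
have supG0 : (0 <= ereal_sup [set (g b)%:E | b in S])%E.
  apply: le_trans (_ : (g x0)%:E <= _)%E; first by rewrite lee_fin g0.
  by apply: ereal_sup_ubound; exists x0.
have gub b : S b -> ((g b)%:E <= ereal_sup [set (g b)%:E | b in S])%E.
  by move=> Sb; apply: ereal_sup_ubound; exists b.
move: supG0 gub; case: (ereal_sup _) => [r| |] // r0 gub; last by rewrite leey.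
have fub : (ereal_sup [set (f b)%:E | b in S] <= (Num.sqrt r)%:E)%E.
  apply: ge_ereal_sup => _ [b Sb <-]; rewrite lee_fin.
  rewrite -(ger0_norm (f0 b Sb)) -sqrtr_sqr; apply: ler_wsqrtr.
  by apply: le_trans (fg b Sb) _; rewrite -lee_fin gub.
move: supF0 fub; case: (ereal_sup _) => [u| |] // u0 fub.
rewrite -EFinM lee_fin; rewrite lee_fin in fub.
have sqrt_sq : Num.sqrt r * Num.sqrt r = r by rewrite -expr2 sqr_sqrtr.
rewrite lee_fin in u0; rewrite lee_fin in r0; nra.
Qed.

Section UnitaryVOA.
Variables (R : realType) (V : lmodType R[i]) (D : VOAData V).
Hypothesis HV : is_simple_unitary_VOA D.

Lemma Y_linear_l (c : R[i]) a a' n b :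
  Y D (c *: a + a') n b = c *: Y D a n b + Y D a' n b.
Proof. by move: HV; case=> H _; apply: H. Qed.

Lemma Y_linear_r (c : R[i]) a n b b' :
  Y D a n (c *: b + b') = c *: Y D a n b + Y D a n b'.
Proof. by move: HV; case=> _; case=> H _; apply: H. Qed.

Lemma vacuum_mode n b : Y D (vac D) n b = if n == -1 then b else 0.
Proof. by move: HV; do 3!case=> _; case=> H _; apply: H. Qed.

Lemma borcherds a b c (p q r : int) : exists K0 : nat, forall K : nat, (K0 <= K)%N ->
  \sum_(i < K) ((zbin p i)%:~R : R[i]) *: Y D (Y D a (r + i%:Z) b) (p + q - i%:Z) c =
  \sum_(i < K) (((-1) ^+ i * (zbin r i)%:~R) : R[i]) *:
     (Y D a (p + r - i%:Z) (Y D b (q + i%:Z) c)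
      - (((-1) ^ r) : R[i]) *: Y D b (q + r - i%:Z) (Y D a (p + i%:Z) c)).
Proof. by move: HV; do 6!case=> _; case=> H _; apply: H. Qed.

Lemma L_derivative a n b : Y D (Lop D (-1) a) n b = - (n%:~R *: Y D a (n - 1) b).
Proof. by move: HV; do 8!case=> _; case=> H _; apply: H. Qed.

Lemma proj_linear k (c : R[i]) u v :
  Defs.proj D k (c *: u + v) = c *: Defs.proj D k u + Defs.proj D k v.
Proof. by move: HV; do 9!case=> _; case=> H _; apply: H. Qed.

Lemma proj_homog k v : homog D k (Defs.proj D k v).
Proof. by move: HV; do 10!case=> _; case=> H _; apply: H. Qed.

Lemma proj_id k v : homog D k v -> Defs.proj D k v = v.
Proof. by move: HV; do 11!case=> _; case=> H _; apply: H. Qed.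

Lemma proj_other j k v : homog D k v -> j <> k -> Defs.proj D j v = 0.
Proof. by move: HV; do 12!case=> _; case=> H _; apply: H. Qed.

Lemma proj_bound v k : (dbound D v <= k)%N -> Defs.proj D k v = 0.
Proof. by move: HV; do 13!case=> _; case=> H _; apply: H. Qed.

Lemma proj_sum v : v = \sum_(k < dbound D v) Defs.proj D k v.
Proof. by move: HV; do 14!case=> _; case=> H _; apply: H. Qed.

Lemma cft_type v : homog D 0 v -> exists c : R[i], v = c *: vac D.
Proof. by move: HV; do 16!case=> _; case=> H _; apply: H. Qed.

Lemma ip_linear (c : R[i]) u u' v : ip D (c *: u + u') v = c * ip D u v + ip D u' v.
Proof. by move: HV; do 19!case=> _; case=> H _; apply: H. Qed.

Lemma ip_hermitian u v : ip D u v = (ip D v u)^*.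
Proof. by move: HV; do 20!case=> _; case=> H _; apply: H. Qed.

Lemma ip_ge0 v : 0 <= ip D v v.
Proof. by move: HV; do 21!case=> _; case=> H _; apply: H. Qed.

Lemma ip_definite v : ip D v v = 0 -> v = 0.
Proof. by move: HV; do 22!case=> _; case=> H _; apply: H. Qed.

Lemma star_involutive a : star D (star D a) = a.
Proof. by move: HV; do 25!case=> _; case=> H _; apply: H. Qed.

Lemma invariance a b c (n : int) :
  ip D b (smode D a n c) = ip D (smode D (star D a) (- n) b) c.
Proof. by move: HV; do 27!case=> _; apply. Qed.

Lemma Y_addl n b : {morph (fun a => Y D a n b) : u v / u + v}.
Proof. by move=> u v /=; have := Y_linear_l 1 u v n b; rewrite !scale1r. Qed.

Lemma Y_addr a n : {morph Y D a n : u v / u + v}.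
Proof. by move=> u v; have := Y_linear_r 1 a n u v; rewrite !scale1r. Qed.

Lemma proj_add k : {morph Defs.proj D k : u v / u + v}.
Proof. by move=> u v; have := proj_linear k 1 u v; rewrite !scale1r. Qed.

Lemma ip_addl w : {morph (fun u => ip D u w) : u v / u + v}.
Proof. by move=> u v /=; have := ip_linear 1 u v w; rewrite scale1r mul1r. Qed.

Lemma ip_addr w : {morph ip D w : u v / u + v}.
Proof.
by move=> u v; rewrite ip_hermitian ip_addl rmorphD [ip D w u]ip_hermitian
  [ip D w v]ip_hermitian.
Qed.

Lemma Y0l n b : Y D 0 n b = 0. Proof. exact: morph_add0 (Y_addl n b). Qed.
Lemma Y0r a n : Y D a n 0 = 0. Proof. exact: morph_add0 (Y_addr a n). Qed.
Lemma proj0 k : Defs.proj D k 0 = 0. Proof. exact: morph_add0 (proj_add k). Qed.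
Lemma ip0l w : ip D 0 w = 0. Proof. exact: morph_add0 (ip_addl w). Qed.
Lemma ip0r w : ip D w 0 = 0. Proof. exact: morph_add0 (ip_addr w). Qed.

Lemma ip_scalel c u w : ip D (c *: u) w = c * ip D u w.
Proof. by rewrite -[c *: u]addr0 ip_linear ip0l addr0. Qed.

Lemma ip_scaler c u w : ip D w (c *: u) = c^* * ip D w u.
Proof. by rewrite ip_hermitian ip_scalel rmorphM [ip D w u]ip_hermitian. Qed.

Section Sums.
Variables (I : Type) (r : seq I) (P : pred I) (F : I -> V).

Lemma Y_suml n b :
  Y D (\sum_(i <- r | P i) F i) n b = \sum_(i <- r | P i) Y D (F i) n b.
Proof. exact: (morph_add_sum _ _ _ (Y_addl n b)). Qed.

Lemma Y_sumr a n :
  Y D a n (\sum_(i <- r | P i) F i) = \sum_(i <- r | P i) Y D a n (F i).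
Proof. exact: morph_add_sum (Y_addr a n). Qed.

Lemma proj_sumE k :
  Defs.proj D k (\sum_(i <- r | P i) F i) = \sum_(i <- r | P i) Defs.proj D k (F i).
Proof. exact: morph_add_sum (proj_add k). Qed.

Lemma ip_sumr w :
  ip D w (\sum_(i <- r | P i) F i) = \sum_(i <- r | P i) ip D w (F i).
Proof. exact: morph_add_sum (ip_addr w). Qed.

End Sums.

Lemma vnorm_sqr w : real_complex R (vnorm D w ^+ 2) = ip D w w.
Proof.
have := ip_ge0 w; rewrite /vnorm; case: (ip D w w) => r s.
by rewrite lecE /= => /andP [/eqP -> r0]; rewrite sqr_sqrtr.
Qed.

Lemma vnorm_ge0 w : 0 <= vnorm D w.
Proof. exact: sqrtr_ge0. Qed.

Lemma vnorm_eq0 w : vnorm D w = 0 -> w = 0.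
Proof. by move=> w0; apply: ip_definite; rewrite -vnorm_sqr w0 expr0n. Qed.

Lemma proj_homogE j k v : homog D k v -> Defs.proj D j v = if j == k then v else 0.
Proof.
move=> hk; have [->|ne] := eqVneq j k; first exact: proj_id.
by apply: proj_other hk _; apply/eqP.
Qed.

Lemma smode_homog d a n c : homog D d a -> smode D a n c = Y D a (n + d%:Z - 1) c.
Proof.
move=> Ha; rewrite /smode; case: (ltnP d (dbound D a)) => hd.
  rewrite (bigD1 (Ordinal hd)) //= (proj_homogE _ Ha) eqxx big1 ?addr0 // => k.
  rewrite (proj_homogE _ Ha) => /negbTE hk.
  have -> : (k == d :> nat) = false by apply/eqP => kd; move/eqP: hk; apply; apply: val_inj.
  exact: Y0l.
have a0 : a = 0.
  rewrite (proj_sum a) big1 // => k _; rewrite (proj_homogE _ Ha).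
  by case: eqP => // kd; move: (ltn_ord k); rewrite kd ltnNge hd.
by rewrite a0 Y0l big1 // => k _; rewrite proj0 Y0l.
Qed.

(* The Borcherds identity for (nu, a, c) with p = 1, q = -1, r = 0: the
   commutator formula [L_0, a_(-1)] c = (L_{-1} a)_(0) c + (L_0 a)_(-1) c. *)
Lemma L0_commutator a c :
  Lop D 0 (Y D a (-1) c) =
  Y D (Lop D (-1) a) 0 c + Y D (Lop D 0 a) (-1) c + Y D a (-1) (Lop D 0 c).
Proof.
have [K0 HK] := borcherds (conf D) a c 1 (-1) 0.
have := HK K0.+2 (leqW (leqnSn K0)).
rewrite !big_ord_recl.
rewrite big1; last by move=> i _; rewrite /= /bump !leq0n !add1n bin_small // scale0r.
rewrite big1; last by move=> i _; rewrite /= /bump !leq0n !add1n bin0n mulr0 scale0r.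
rewrite /= /bump /= ?addr0 ?add0r ?subr0 ?bin0 ?binn ?expr0 ?mul1r ?expr0z ?scale1r.
rewrite addn0 bin0n /= mulr0 scale0r addr0 => E.
by rewrite /Lop add0r addNr -(subrK (Y D a (-1) (Y D (conf D) 1 c)) (Y D _ 1 _)) -E.
Qed.

Lemma homog_normal_product d j a c :
  homog D d a -> homog D j c -> homog D (d + j) (Y D a (-1) c).
Proof.
move=> Ha Hc; rewrite /homog L0_commutator L_derivative Ha Hc scale0r oppr0 add0r.
rewrite -[_ *: a]addr0 -[_ *: c]addr0 Y_linear_l Y_linear_r Y0l Y0r !addr0.
by rewrite natrD scalerDl.
Qed.

Lemma smode_normal_product d a x b : homog D d a ->
  smode D (Y D a (-1) x) 0 b =
  \sum_(j < dbound D x) Y D (Y D a (-1) (Defs.proj D j x)) (d%:Z + j%:Z - 1) b.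
Proof.
move=> Ha; set X := Y D a (-1) x; set M := dbound D x.
have projX k : Defs.proj D k X =
    \sum_(j < M) (if k == (d + j)%N then Y D a (-1) (Defs.proj D j x) else 0).
  rewrite /X {1}(proj_sum x) Y_sumr proj_sumE; apply: eq_bigr => j _.
  exact/proj_homogE/homog_normal_product/proj_homog.
rewrite /smode.
rewrite (eq_bigr (fun k : 'I_(dbound D X) => \sum_(j < M) (if (k : nat) == (d + j)%N
    then Y D (Y D a (-1) (Defs.proj D j x)) (0 + k%:Z - 1) b else 0))); last first.
  move=> k _; rewrite projX Y_suml; apply: eq_bigr => j _.
  by case: ifP => _ //; apply: Y0l.
rewrite exchange_big /=; apply: eq_bigr => j _.
case: (ltnP (d + j) (dbound D X)) => h.
  rewrite (bigD1 (Ordinal h)) //= eqxx big1 ?addr0; first by rewrite add0r PoszD.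
  by move=> k hk; case: eqP => // e; move/eqP: hk; case; apply: val_inj.
rewrite big1; last by move=> k _; case: eqP => // e; move: (ltn_ord k); rewrite e ltnNge h.
suff -> : Y D a (-1) (Defs.proj D j x) = 0 by rewrite Y0l.
have := proj_bound h; rewrite projX (bigD1 j) //= eqxx big1 ?addr0 //.
move=> j' hj'; case: eqP => // /eqP; rewrite eqn_add2l => /eqP e.
by move/eqP: hj'; case; apply: val_inj.
Qed.

(* The Borcherds identity with p = 0, r = -1: the modes of a normal-ordered
   product are normal-ordered sums of products of modes,
   (a_(-1) y)_(q) c = sum_i a_(-1-i) y_(q+i) c + y_(q-1-i) a_(i) c. *)
Lemma borcherds_normal_product a y q c : exists K0, forall K, (K0 <= K)%N ->
  Y D (Y D a (-1) y) q c = \sum_(i < K)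
     (Y D a (-1 - i%:Z) (Y D y (q + i%:Z) c) + Y D y (q - 1 - i%:Z) (Y D a i%:Z c)).
Proof.
have [K0 HK] := borcherds a y c 0 q (-1).
exists K0.+1 => -[//|K] hK; have := HK K.+1 (ltnW hK).
rewrite big_ord_recl big1; last by move=> i _; rewrite /= /bump leq0n add1n bin0n scale0r.
rewrite /= addr0 add0r subr0 addr0 scale1r => ->.
apply: eq_bigr => i _; rewrite sign_zbinN1 scale1r add0r.
by rewrite exprN1 invrN1 scaleN1r opprK add0r.
Qed.

Lemma zero_mode_normal_product d a x b : homog D d a ->
  exists K0, forall K, (K0 <= K)%N ->
  smode D (smode D a (- d%:Z) x) 0 b =
  \sum_(i < K) (smode D a (- d%:Z - i%:Z) (smode D x (d%:Z + i%:Z) b)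
                + smode D x (d%:Z - 1 - i%:Z) (Y D a i%:Z b)).
Proof.
move=> Ha; rewrite (smode_homog _ _ Ha) addNr sub0r (smode_normal_product _ _ Ha).
pose P j K := Y D (Y D a (-1) (Defs.proj D j x)) (d%:Z + j%:Z - 1) b =
  \sum_(i < K) (Y D a (-1 - i%:Z) (Y D (Defs.proj D j x) (d%:Z + j%:Z - 1 + i%:Z) b)
     + Y D (Defs.proj D j x) (d%:Z + j%:Z - 1 - 1 - i%:Z) (Y D a i%:Z b)).
have [K0 HK] := @eventually_forall_lt P (dbound D x)
  (fun j _ => borcherds_normal_product a (Defs.proj D j x) (d%:Z + j%:Z - 1) b).
exists K0 => K hK.
rewrite (eq_bigr _ (fun (j : 'I_(dbound D x)) _ => HK K hK j (ltn_ord j))).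
rewrite exchange_big /=; apply: eq_bigr => i _.
rewrite big_split /= -Y_sumr (smode_homog _ _ Ha) /smode.
congr (_ + _); last by apply: eq_bigr => j _; congr (Y D _ _ _); lia.
by congr (Y D _ _ _); [lia | apply: eq_bigr => j _; congr (Y D _ _ _); lia].
Qed.

(* Key identity: by invariance, every term of the expansion above with
   x = a^* becomes a squared norm, so for K large
   (b | (a_{-d} a^* )_0 b) = sum_(i < K) ||a^*_(d+i) b||^2 + ||a_(i) b||^2. *)
Lemma zero_mode_sum_of_squares d a b : homog D d a ->
  exists K0, forall K, (K0 <= K)%N ->
  ip D b (smode D (smode D a (- d%:Z) (star D a)) 0 b) =
  \sum_(i < K) (ip D (smode D (star D a) (d%:Z + i%:Z) b)
                     (smode D (star D a) (d%:Z + i%:Z) b)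
               + ip D (Y D a i%:Z b) (Y D a i%:Z b)).
Proof.
move=> Ha; have [K0 HK] := zero_mode_normal_product (star D a) b Ha.
exists K0 => K hK; rewrite (HK K hK) ip_sumr; apply: eq_bigr => i _.
rewrite ip_addr; congr (_ + _); rewrite invariance.
  by congr (ip D (smode D _ _ _) _); lia.
by rewrite star_involutive (smode_homog _ _ Ha); congr (ip D (Y D _ _ _) _); lia.
Qed.

(* For a in V_0 = C Omega the zero mode a_0 is a scalar, and a^*_0 is its
   adjoint; hence ||a_0 b|| = ||a^*_0 b||. *)
Lemma degree0_mode_norm a b : homog D 0 a ->
  ip D (smode D a 0 b) (smode D a 0 b) =
  ip D (smode D (star D a) 0 b) (smode D (star D a) 0 b).
Proof.
move=> Ha; have [c ac] := cft_type Ha.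
have a0 y : smode D a 0 y = c *: y.
  by rewrite (smode_homog _ _ Ha) ac -[c *: vac D]addr0 Y_linear_l Y0l addr0 vacuum_mode.
set u := smode D (star D a) 0 b.
have ip_u y : ip D y u = c * ip D y b.
  by rewrite /u invariance star_involutive oppr0 a0 ip_scalel.
rewrite a0 ip_scalel ip_scaler ip_u [ip D u b]ip_hermitian ip_u rmorphM.
by congr (_ * (_ * _)); apply: ip_hermitian.
Qed.

(* First claim: ||a_m b||^2 <= (b | (a_{-d} a^* )_0 b) for a in V_d, m >= 0.
   The left side is the term i = m + d - 1 of the second series in
   [zero_mode_sum_of_squares] (a_m = a_(m+d-1)), or, when m = d = 0, the term
   i = 0 of the first one. *)
Lemma sqr_norm_mode_le d a b (m : int) : homog D d a -> 0 <= m ->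
  real_complex R (vnorm D (smode D a m b) ^+ 2) <=
  ip D b (smode D (smode D a (- d%:Z) (star D a)) 0 b).
Proof.
case: m => [m Ha _|//]; rewrite vnorm_sqr.
have [K0 HK] := zero_mode_sum_of_squares b Ha.
set K := maxn K0 (m + d).+1.
have iK : ((m + d).-1 < K)%N by rewrite leq_max ltnS leq_pred orbT.
rewrite (HK K (leq_maxl _ _)).
have [le_first le_second] :=
  le_sum_pair (Ordinal iK) (fun i => ip_ge0 (smode D (star D a) (d%:Z + i%:Z) b))
                           (fun i => ip_ge0 (Y D a i%:Z b)).
case: (posnP (m + d)) => [md0|md_gt0].
  have [m0 d0] : m = 0%N /\ d = 0%N by lia.
  subst m d; apply: le_trans le_first; by rewrite /= add0r degree0_mode_norm.
apply: le_trans le_second; rewrite /= (smode_homog _ _ Ha).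
by have -> : m%:Z + d%:Z - 1 = ((m + d).-1)%:Z by lia.
Qed.

Lemma cauchy_schwarz_real x y : complex.Im (ip D x y) = 0 ->
  complex.Re (ip D x y) <= vnorm D x * vnorm D y.
Proof.
move=> Im0; set t := vnorm D x; set s := vnorm D y.
have [t0|t_neq0] := eqVneq t 0; first by rewrite (vnorm_eq0 t0) ip0l t0 mul0r.
have [s0|s_neq0] := eqVneq s 0; first by rewrite (vnorm_eq0 s0) ip0r s0 mulr0.
set w := complex.Re (ip D x y).
have ip_xy : ip D x y = w%:C by rewrite /w; case: (ip D x y) Im0 => r i0 /= ->.
have ip_yx : ip D y x = w%:C by rewrite ip_hermitian ip_xy conjc_real.
have ip_xx : ip D x x = (t ^+ 2)%:C by rewrite -vnorm_sqr.
have ip_yy : ip D y y = (s ^+ 2)%:C by rewrite -vnorm_sqr.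
(* positivity of || s x - t y ||^2 = 2 s^2 t^2 - 2 s t w *)
have := ip_ge0 (s%:C *: x + (- t%:C) *: y).
rewrite !ip_addl !ip_scalel !ip_addr !ip_scaler ip_xx ip_yy ip_xy ip_yx.
rewrite lecE /= => /andP [_ H].
rewrite !(mulr0, mul0r, oppr0, subr0, addr0, add0r) in H.
have t_gt0 : 0 < t by rewrite lt_def t_neq0 vnorm_ge0.
have s_gt0 : 0 < s by rewrite lt_def s_neq0 vnorm_ge0.
have st_gt0 : 0 < t * s by apply: mulr_gt0.
nra.
Qed.

Lemma sqr_le_of_ip_bound u b w :
  real_complex R (vnorm D u ^+ 2) <= ip D b w -> vnorm D b <= 1 ->
  vnorm D u ^+ 2 <= vnorm D w.
Proof.
rewrite lecE => /andP [/eqP Im0 le_Re] b1.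
have := cauchy_schwarz_real Im0.
have := vnorm_ge0 w; have := vnorm_ge0 b.
move: le_Re; rewrite /=; set r := complex.Re _; nra.
Qed.

Lemma opnorm_sqr_le (S T : V -> V) (n : int) :
  (forall b, vnorm D b <= 1 -> vnorm D (S b) ^+ 2 <= vnorm D (T b)) ->
  (opnorm D S n * opnorm D S n <= opnorm D T n)%E.
Proof.
move=> ST; rewrite /opnorm; apply: (@ereal_sup_sqr_le _ _ _ _ _ 0).
- split; first by move=> k _; apply: proj0.
  by rewrite /vnorm ip0l sqrtr0.
- by move=> b _; apply: vnorm_ge0.
- by move=> b [_ b1]; apply: ST.
Qed.

End UnitaryVOA.

Theorem mainTheorem1 (R : realType) (V : lmodType R[i]) (D : VOAData V)
  (HV : is_simple_unitary_VOA D) (d : nat) (a : V) (Ha : homog D d a) :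
  (forall (b : V) (m : int), 0 <= m ->
     (real_complex R ((vnorm D (smode D a m b)) ^+ 2))
       <= ip D b (smode D (smode D a (- d%:Z) (star D a)) 0 b)) /\
  (forall (m : int) (n : int), 0 <= m ->
     (opnorm D (smode D a m) n * opnorm D (smode D a m) n
       <= opnorm D (smode D (smode D a (- d%:Z) (star D a)) 0) n)%E) /\
  (forall n : int,
     (opnorm D (smode D a 0) n * opnorm D (smode D a 0) n
       <= opnorm D (smode D (smode D a (- d%:Z) (star D a)) 0) n)%E).
Proof.
have pointwise (b : V) (m : int) : 0 <= m ->
    real_complex R (vnorm D (smode D a m b) ^+ 2) <=
    ip D b (smode D (smode D a (- d%:Z) (star D a)) 0 b).
  move=> m_ge0; exact: (sqr_norm_mode_le HV b Ha m_ge0).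
have operator (m n : int) : 0 <= m ->
    (opnorm D (smode D a m) n * opnorm D (smode D a m) n
       <= opnorm D (smode D (smode D a (- d%:Z) (star D a)) 0) n)%E.
  move=> m_ge0; apply: (opnorm_sqr_le HV) => b b1.
  exact: (sqr_le_of_ip_bound HV (pointwise b m m_ge0) b1).
split; first exact: pointwise.
by split => [|n]; [|apply: operator].
Qed.
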